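(* For every positive integer $t$ there is a constant $c(t)>0$ such that the following holds. Let $d\ge1$, $U=\{u_1,\dots,u_d\}$ the vertex set of a complete graph, $L$ a $t$-feasible list assignment of $U$, and let $A$ be the set of constrained vertices $u$ with $|L(u)|\le 2(3t+2)$. Let $\alpha,\beta\in\Omega^L_U$ and let $\xi_A$ be an injective map $A\to[d+1]$ with $\xi_A(u)\in L(u)$ for all $u\in A$, such that $\alpha|_A$ and $\xi_A$ differ on at most one vertex, and $\xi_A$ and $\beta|_A$ differ on at most one vertex. Then there are at least $c(t)|\Omega^L_U|$ colourings $\xi\in\Omega^L_U$ with $\xi|_A=\xi_A$ such that both $(\alpha,\xi)$ and $(\xi,\beta)$ are good pairs.
   Context: Lists $L(u)\subseteq[d+1]$; an $L$-colouring is an injective $\alpha:U\to[d+1]$ with $\alpha(u)\in L(u)$; $\Omega^L_U$ is their set. $L$ is $t$-feasible if $|L(u_i)|\ge t+1$ for $i\in[t]$ and $|L(u_i)|=d+1$ for $i\in[d]\setminus[t]$. A vertex $u$ is free if $|L(u)|=d+1$ and constrained otherwise. Add an extra vertex $w$ (regarded as free) and extend each $\alpha\in\Omega^L_U$ by letting $\alpha(w)$ be the unique colour of $[d+1]$ not in $\alpha(U)$. For $\alpha,\beta\in\Omega^L_U$ let $f(\alpha,\beta)$ be the permutation of $U\cup\{w\}$ with $f(x)=y$ iff $\alpha(x)=\beta(y)$; $(\alpha,\beta)$ is a good pair if $f(\alpha,\beta)$ has no cycle of length at least $2$ all of whose vertices are constrained. *)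

From mathcomp Require Import all_boot all_order all_algebra.
Set Implicit Arguments. Unset Strict Implicit. Unset Printing Implicit Defensive.

(* Vertices U = {u_1,...,u_d} are 'I_d (u_{i+1} is i); colours [d+1] are 'I_d.+1.
   A list assignment is L : 'I_d -> {set 'I_d.+1}. *)

Section Defs.
Variable d : nat.
Implicit Types (L : 'I_d -> {set 'I_d.+1}) (a b : {ffun 'I_d -> 'I_d.+1}).

Definition feasible (t : nat) L : Prop :=
  forall i : 'I_d, if i < t then t.+1 <= #|L i| else #|L i| == d.+1.

Definition is_Lcol L a : bool := injectiveb a && [forall u, a u \in L u].

Definition Omega L : {set {ffun 'I_d -> 'I_d.+1}} := [set a | is_Lcol L a].

(* constrained / free vertices; the extra vertex w (= None) is free *)
Definition constrained L (x : option 'I_d) : bool :=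
  if x is Some u then #|L u| != d.+1 else false.

(* extension of a colouring to U + {w}: w gets the colour not in alpha(U) *)
Definition missing a : 'I_d.+1 := odflt ord0 [pick c | c \notin codom a].

Definition ext a (x : option 'I_d) : 'I_d.+1 :=
  if x is Some u then a u else missing a.

Definition fperm a b (x : option 'I_d) : option 'I_d :=
  odflt x [pick y | ext b y == ext a x].

Definition good_pair L a b : Prop :=
  ~ exists s : seq (option 'I_d),
      [/\ 2 <= size s, uniq s, fcycle (fperm a b) s & all (constrained L) s].

Definition Aset (t : nat) L : {set 'I_d} :=
  [set u | (#|L u| != d.+1) && (#|L u| <= 2 * (3 * t + 2))].

End Defs.

From mathcomp Require Import all_boot all_order all_algebra all_fingroup.
From mathcomp Require Import zify.
Set Implicit Arguments. Unset Strict Implicit. Unset Printing Implicit Defensive.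

(* Let B be the set of constrained vertices; feasibility gives |B| <= t.  Let
   X be the set of colours used by alpha and beta on B and by xi_A on A, so
   |X| <= 3t.  The vertices of B \ A have lists longer than |B| + |X|, so once
   and for all they can be given distinct colours tau(u) from their lists
   outside X.  Every L-colouring g is then recoloured by a permutation of a
   palette C of size O(t^2), independent of g, so that the result xi agrees
   with xi_A on A and uses no colour of X on B \ A.  Since g is determined by
   xi and the permutation, at least |Omega|/|C|! colourings xi arise.
   In a cycle of f(alpha, xi) through constrained vertices, every vertex v has
   a predecessor u with xi(v) = alpha(u) in X, so v lies in A, and a successor
   v' <> v with xi(v') = alpha(v), so alpha(v) <> xi(v) = xi_A(v).  Hence
   alpha and xi_A differ on all the (at least two) vertices of the cycle.  The
   pair (xi, beta) is symmetric. *)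

Lemma fcycle_step (T : eqType) (f : T -> T) (s : seq T) x :
  2 <= size s -> uniq s -> fcycle f s -> x \in s ->
  [/\ f x \in s, f x != x & exists2 y, y \in s & f y = x].
Proof.
move=> s2 us cs xs.
have fE y : y \in s -> f y = next s y by move=> ys; apply/eqP; exact: next_cycle cs ys.
split; last by exists (prev s x); rewrite ?mem_prev // fE ?mem_prev ?next_prev.
  by rewrite fE ?mem_next.
have [i s' rot_s] := rot_to xs.
have : uniq (x :: s') by rewrite -rot_s rot_uniq.
rewrite fE // -(next_rot i us) rot_s.
case: s' rot_s => [|y s'] rot_s; first by move: s2; rewrite -(size_rot i) rot_s.
by rewrite /next /= eqxx inE negb_or eq_sym => /andP[/andP[]].
Qed.

Lemma exists_injective_choice (I T : finType) (t0 : T) (D : {set I}) (X : {set T})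
    (Lf : I -> {set T}) :
  {in D, forall y, #|D| + #|X| < #|Lf y|} ->
  exists2 tau : I -> T, {in D, forall y, tau y \in Lf y :\: X} & {in D &, injective tau}.
Proof.
move: {2}#|D| (erefl #|D|) => n; elim: n D X => [|n IH] D X cardD bigL.
  exists (fun=> t0) => [y|y z] yD; by move: cardD; rewrite (cardD1 y) yD.
have [x xD] : exists x, x \in D by apply/card_gt0P; rewrite cardD.
have [c cL cX] : exists2 c, c \in Lf x & c \notin X.
  apply/subsetPn; apply: contraTN (bigL x xD) => /subset_leq_card.
  by rewrite -leqNgt => /leq_trans; apply; rewrite leq_addl.
have cardDx : #|D :\ x| = n by move: cardD; rewrite (cardsD1 x) xD add1n => -[].
have [|tau0 tau0L tau0_inj] := IH (D :\ x) (c |: X) cardDx.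
  move=> y /setD1P[_ yD]; apply: leq_ltn_trans (bigL y yD).
  by rewrite cardDx cardD cardsU1 cX; lia.
have tau0P y : y \in D -> y != x -> [/\ tau0 y != c, tau0 y \notin X & tau0 y \in Lf y].
  move=> yD yx; have := tau0L y; rewrite !inE yx yD negb_or.
  by move=> /(_ isT) /andP[/andP[-> ->] ->].
exists (fun y => if y == x then c else tau0 y) => [y yD | y z yD zD] /=.
  case: eqP => [->|/eqP yx]; first by rewrite inE cL cX.
  by have [] := tau0P y yD yx; rewrite inE => _ -> ->.
case: eqP => [->|/eqP yx]; case: eqP => [->|/eqP zx] // E.
- by have [] := tau0P z zD zx; rewrite E eqxx.
- by have [] := tau0P y yD yx; rewrite E eqxx.
- by apply: tau0_inj; rewrite // !inE ?yx ?zx.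
Qed.

Lemma perm_on_extend (I T : finType) (B : {set I}) (C : {set T}) (g h : I -> T) :
    {in B &, injective g} -> {in B &, injective h} ->
    {in B, forall u, h u != g u -> (g u \in C) && (h u \in C)} ->
  exists2 p : {perm T}, perm_on C p & {in B, forall u, p (g u) = h u}.
Proof.
move: {2}#|B| (erefl #|B|) => n; elim: n B => [|n IH] B cardB g_inj h_inj ghC.
  by exists 1%g => [|u uB]; [exact: perm_on1 | move: cardB; rewrite (cardD1 u) uB].
have [x xB] : exists x, x \in B by apply/card_gt0P; rewrite cardB.
have cardBx : #|B :\ x| = n by move: cardB; rewrite (cardsD1 x) xB add1n => -[].
have subB : {subset B :\ x <= B} by move=> u /setD1P[].
have [p pC pE] := IH (B :\ x) cardBx (sub_in2 subB g_inj) (sub_in2 subB h_inj)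
  (sub_in1 subB ghC).
exists (p * tperm (p (g x)) (h x))%g => [|u uB]; last first.
  rewrite permM; have [->|ux] := eqVneq u x; first by rewrite tpermL.
  have uBx : u \in B :\ x by rewrite !inE ux.
  rewrite -(pE u uBx) tpermD // ?(inj_eq perm_inj) ?(pE u uBx).
    by rewrite (inj_in_eq g_inj xB uB) eq_sym.
  by rewrite (inj_in_eq h_inj xB uB) eq_sym.
apply: perm_onM => //.
have [->|pgh] := eqVneq (p (g x)) (h x); first by rewrite tperm1 perm_on1.
have [/eqP hg|/(ghC x xB)/andP[gC hC]] := boolP (h x == g x).
  have gC : g x \in C by apply: contraR pgh => gC; rewrite hg (out_perm pC).
  by apply: subset_trans (tperm_on _ _) _; apply/subsetP => z;
    rewrite !inE => /orP[]/eqP->; rewrite ?hg ?(perm_closed _ pC).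
by apply: subset_trans (tperm_on _ _) _; apply/subsetP => z;
  rewrite !inE => /orP[]/eqP->; rewrite ?(perm_closed _ pC).
Qed.

Lemma card_bigcup_le (I T : finType) (A : {set I}) (F : I -> {set T}) :
  #|\bigcup_(i in A) F i| <= \sum_(i in A) #|F i|.
Proof.
elim/big_ind2: _ => [|m X n Y mX nY|i _]; rewrite ?cards0 //.
by apply: leq_trans (leq_card_setU _ _) _; rewrite leq_add.
Qed.

Lemma card_le_perm_image (I T : finType) (S : {set {ffun I -> T}}) (C : {set T})
    (p : {ffun I -> T} -> {perm T}) :
  {in S, forall g, perm_on C (p g)} ->
  #|S| <= #|[set [ffun u => p g (g u)] | g in S]| * #|C|`!.
Proof.
move=> pC; pose F g := ([ffun u => p g (g u)], p g).
have F_inj : {in S &, injective F}.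
  move=> g g' _ _ [/ffunP E1 E2]; apply/ffunP => v.
  by have := E1 v; rewrite !ffunE E2 => /perm_inj.
have <- : #|F @: S| = #|S| by apply: card_in_imset.
rewrite -card_perm -(cardsE (perm_on C)) -cardsX.
apply/subset_leq_card/subsetP => _ /imsetP[g gS ->].
by rewrite in_setX /= imset_f // inE; apply: pC.
Qed.

Section GoodPairs.

Variables (d : nat) (L : 'I_d -> {set 'I_d.+1}).
Implicit Types (a b xi : {ffun 'I_d -> 'I_d.+1}).

Lemma OmegaP a : reflect (injective a /\ forall u, a u \in L u) (a \in Omega L).
Proof.
rewrite inE /is_Lcol.
by apply: (iffP andP) => -[/injectiveP ? /forallP ?].
Qed.

Lemma fperm_edge a b u v : fperm a b (Some u) = Some v -> v != u -> b v = a u.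
Proof.
rewrite /fperm; case: pickP => [y /eqP ext_y /= Ey|_ [->]]; last by rewrite eqxx.
by rewrite Ey in ext_y.
Qed.

Lemma fcycle_edge a b s x :
    2 <= size s -> uniq s -> fcycle (fperm a b) s -> all (constrained L) s ->
    x \in s ->
  exists u v, [/\ x = Some u, fperm a b x = Some v, Some v \in s, v != u & b v = a u].
Proof.
move=> s2 us cs s_con xs; have [fxs fx _] := fcycle_step s2 us cs xs.
case: x fxs fx xs => [u|] fxs fx xs; last by have := allP s_con _ xs.
case Ef: (fperm a b (Some u)) fxs fx => [v|] fxs fx; last by have := allP s_con _ fxs.
have vu : v != u by apply: contraNneq fx => ->.
by exists u, v; split; rewrite // (fperm_edge Ef).
Qed.

Lemma bad_cycle_vertices a b s :
    2 <= size s -> uniq s -> fcycle (fperm a b) s -> all (constrained L) s ->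
  exists2 S : {set 'I_d}, 2 <= #|S| & {in S, forall u,
    [/\ constrained L (Some u), exists2 v, v \in S & v != u /\ b v = a u
      & exists2 w, w \in S & w != u /\ b u = a w]}.
Proof.
move=> s2 us cs s_con.
have edge := fcycle_edge s2 us cs s_con.
exists [set u | Some u \in s].
  have [x xs] : exists x, x \in s.
    by case: s s2 {us cs s_con edge} => // x s' _; exists x; rewrite mem_head.
  have [u [v [xu _ vs vu _]]] := edge x xs.
  have uvS : [set u; v] \subset [set u | Some u \in s].
    by apply/subsetP => z; rewrite !inE => /orP[]/eqP->; rewrite -?xu.
  by apply: leq_trans (subset_leq_card uvS); rewrite cards2 eq_sym vu.
move=> u; rewrite inE => us'.
have [_ [v [[<-] _ vs vu buv]]] := edge _ us'.
have [_ _ [y ys fy]] := fcycle_step s2 us cs us'.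
have [w [v' [yw fw _ v'w bv'w]]] := edge _ ys.
move: fw v'w bv'w; rewrite fy => -[<-] uw buw.
split; first exact: allP s_con _ us'.
  by exists v; rewrite ?inE.
by exists w; rewrite ?inE -?yw ?(eq_sym w).
Qed.

Lemma good_pair_left_agree a xi (A : {set 'I_d}) :
    injective xi ->
    (forall u v, constrained L (Some u) -> constrained L (Some v) -> xi v = a u -> v \in A) ->
    #|[set u in A | a u != xi u]| <= 1 ->
  good_pair L a xi.
Proof.
move=> xi_inj inA agree [s [s2 us cs s_con]].
have [S S2 S_edges] := bad_cycle_vertices s2 us cs s_con.
suff /subset_leq_card : S \subset [set u in A | a u != xi u] by lia.
apply/subsetP => u uS; have [cu [v _ [vu xiv]] [w wS [_ xiu]]] := S_edges u uS.
have [cw _ _] := S_edges w wS.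
by rewrite inE (inA w u) //= -xiv (inj_eq xi_inj).
Qed.

Lemma good_pair_right_agree xi b (A : {set 'I_d}) :
    injective xi ->
    (forall u v, constrained L (Some u) -> constrained L (Some v) -> b v = xi u -> u \in A) ->
    #|[set u in A | xi u != b u]| <= 1 ->
  good_pair L xi b.
Proof.
move=> xi_inj inA agree [s [s2 us cs s_con]].
have [S S2 S_edges] := bad_cycle_vertices s2 us cs s_con.
suff /subset_leq_card : S \subset [set u in A | xi u != b u] by lia.
apply/subsetP => u uS; have [cu [v vS [_ bv]] [w _ [wu bu]]] := S_edges u uS.
have [cv _ _] := S_edges v vS.
by rewrite inE (inA u v) //= bu (inj_eq xi_inj) eq_sym.
Qed.

End GoodPairs.

(* The palette holds at most 3t reserved colours, t colours of tau, and the
   lists of the at most t vertices of A, each of size at most 2(3t + 2). *)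
Definition palette_bound (t : nat) : nat := 4 * t + t * (2 * (3 * t + 2)).

Section Recolouring.

Variables (d t : nat) (L : 'I_d -> {set 'I_d.+1}).
Hypothesis feasL : feasible t L.
Implicit Types g : {ffun 'I_d -> 'I_d.+1}.

Local Notation B := [set u | constrained L (Some u)].
Local Notation A := (Aset t L).

Lemma Aset_sub : A \subset B.
Proof. by apply/subsetP => u; rewrite !inE => /andP[]. Qed.

Lemma card_constrained : #|B| <= t.
Proof.
have Bt u : u \in B -> u < t.
  by rewrite inE /=; have := feasL u; case: ifP => // _ /eqP ->; rewrite eqxx.
rewrite cardE -(size_map val) -[t](size_iota 0).
apply: uniq_leq_size; first by rewrite map_inj_uniq ?enum_uniq //; exact: val_inj.
by move=> _ /mapP[u uB ->]; rewrite mem_iota /= Bt // -mem_enum.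
Qed.

Lemma mem_free_list u c : u \notin B -> c \in L u.
Proof.
rewrite inE /= negbK => /eqP cardL.
suff -> : L u = setT by rewrite inE.
by apply/eqP; rewrite eqEcard subsetT cardsT card_ord cardL leqnn.
Qed.

Variables alpha beta xiA : {ffun 'I_d -> 'I_d.+1}.

Definition reserved_colours : {set 'I_d.+1} := alpha @: B :|: beta @: B :|: xiA @: A.

Lemma card_reserved : #|reserved_colours| <= 3 * t.
Proof.
have cardA : #|A| <= t := leq_trans (subset_leq_card Aset_sub) card_constrained.
apply: leq_trans (leq_of_leqif (leq_card_setU _ _)) _.
apply: leq_trans (leq_add (leq_of_leqif (leq_card_setU _ _)) (leq_imset_card _ _)) _.
apply: leq_trans (leq_add (leq_add (leq_imset_card _ _) (leq_imset_card _ _)) (leqnn _)) _.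
by apply: leq_trans (leq_add (leq_add card_constrained card_constrained) cardA) _; lia.
Qed.

Lemma exists_fresh_choice : exists tau : 'I_d -> 'I_d.+1,
  [/\ {in B :\: A, forall u, tau u \in L u},
      {in B :\: A, forall u, tau u \notin reserved_colours}
    & {in B :\: A &, injective tau}].
Proof.
have [|tau tauP tau_inj] :=
  exists_injective_choice ord0 (X := reserved_colours) (Lf := L) (D := B :\: A).
  move=> u /setDP[uB uA].
  have long : 2 * (3 * t + 2) < #|L u| by move: uB uA; rewrite !inE /= => ->; rewrite ltnNge.
  have cardBA := leq_trans (subset_leq_card (subsetDl B A)) card_constrained.
  by apply: leq_ltn_trans long; apply: leq_trans (leq_add cardBA card_reserved) _; lia.
by exists tau; split=> // u /tauP; rewrite inE => /andP[].
Qed.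

Variable tau : 'I_d -> 'I_d.+1.
Hypotheses (tau_L : {in B :\: A, forall u, tau u \in L u})
  (tau_fresh : {in B :\: A, forall u, tau u \notin reserved_colours})
  (tau_inj : {in B :\: A &, injective tau}).
Hypotheses (xiA_inj : {in A &, injective xiA}) (xiA_L : forall u, u \in A -> xiA u \in L u).

Definition used_colours : {set 'I_d.+1} := reserved_colours :|: tau @: (B :\: A).

(* As tau does not depend on the colouring being recoloured, neither does the
   support of the recolouring permutation. *)
Definition palette : {set 'I_d.+1} := used_colours :|: \bigcup_(u in A) L u.

Lemma card_palette : #|palette| <= palette_bound t.
Proof.
have cardA : #|A| <= t := leq_trans (subset_leq_card Aset_sub) card_constrained.
have cardBA := leq_trans (subset_leq_card (subsetDl B A)) card_constrained.
have cardLA : #|\bigcup_(u in A) L u| <= t * (2 * (3 * t + 2)).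
  have shortL u : u \in A -> #|L u| <= 2 * (3 * t + 2) by rewrite inE => /andP[].
  apply: leq_trans (card_bigcup_le _ _) _; apply: leq_trans (leq_sum _ shortL) _.
  by rewrite sum_nat_const leq_mul2r cardA orbT.
apply: leq_trans (leq_of_leqif (leq_card_setU _ _)) _.
apply: leq_trans (leq_add (leq_of_leqif (leq_card_setU _ _)) cardLA) _.
apply: leq_trans (leq_add (leq_add card_reserved (leq_trans (leq_imset_card _ _) cardBA))
  (leqnn _)) _.
by rewrite /palette_bound; lia.
Qed.

Definition recolour_target g u :=
  if u \in A then xiA u else if g u \in used_colours then tau u else g u.

Lemma recolour_target_A g u : u \in A -> recolour_target g u \in reserved_colours.
Proof. by move=> uA; rewrite /recolour_target uA !inE imset_f ?orbT. Qed.

Lemma recolour_target_fresh g u : u \in B :\: A ->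
  recolour_target g u \notin reserved_colours /\
  (recolour_target g u \in used_colours) = (g u \in used_colours).
Proof.
move=> uBA; have /setDP[_ /negbTE uA] := uBA; rewrite /recolour_target uA.
case: ifP => [_|gU]; first by rewrite tau_fresh // inE imset_f ?orbT.
by split=> //; apply: contraFN gU => gR; rewrite in_setU gR.
Qed.

Lemma recolour_target_inj g : injective g -> {in B &, injective (recolour_target g)}.
Proof.
move=> g_inj u v uB vB E.
have inBA w : w \in B -> w \notin A -> w \in B :\: A by move=> wB wA; rewrite in_setD wA.
have [uA|uA] := boolP (u \in A); have [vA|vA] := boolP (v \in A).
- by move: E; rewrite /recolour_target uA vA; apply: xiA_inj.
- by have [] := recolour_target_fresh g (inBA v vB vA); rewrite -E recolour_target_A.
- by have [] := recolour_target_fresh g (inBA u uB uA); rewrite E recolour_target_A.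
have [_ uU] := recolour_target_fresh g (inBA u uB uA).
have [_ vU] := recolour_target_fresh g (inBA v vB vA).
move: E uU vU; rewrite /recolour_target (negbTE uA) (negbTE vA).
case: ifP => _; case: ifP => _ E uU vU.
- exact: tau_inj (inBA u uB uA) (inBA v vB vA) E.
- by move: vU; rewrite -E uU.
- by move: uU; rewrite E vU.
- exact: g_inj.
Qed.

Lemma recolour_target_L g u :
  (forall v, g v \in L v) -> u \in B -> recolour_target g u \in L u.
Proof.
move=> gL uB; rewrite /recolour_target; case: ifP => uA; first exact: xiA_L.
by case: ifP => // _; apply: tau_L; rewrite in_setD uA.
Qed.

Lemma recolour_target_support g u :
    (forall v, g v \in L v) -> u \in B -> recolour_target g u != g u ->
  (g u \in palette) && (recolour_target g u \in palette).
Proof.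
move=> gL uB.
have usedP c : c \in used_colours -> c \in palette by rewrite /palette in_setU => ->.
have [uA _|uA] := boolP (u \in A).
  apply/andP; split; last by apply: usedP; rewrite in_setU recolour_target_A.
  by rewrite /palette in_setU; apply/orP; right; apply/bigcupP; exists u.
rewrite /recolour_target (negbTE uA); case: ifP => [gU _|]; last by rewrite eqxx.
by rewrite !usedP // /used_colours in_setU imset_f ?orbT // in_setD uA.
Qed.

Definition recolour_perm g : {perm 'I_d.+1} :=
  odflt 1%g [pick p | perm_on palette p
                     & [forall (u | u \in B), p (g u) == recolour_target g u]].

Lemma recolour_permP g : g \in Omega L ->
  perm_on palette (recolour_perm g) /\
  {in B, forall u, recolour_perm g (g u) = recolour_target g u}.
Proof.
move=> /OmegaP[g_inj gL]; rewrite /recolour_perm.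
case: pickP => [p /andP[pC /forall_inP pE]|none]; first by split=> // u /pE /eqP.
have [p pC pE] := perm_on_extend (in2W g_inj) (recolour_target_inj g_inj)
  (fun u => recolour_target_support gL).
have /negP[] := negbT (none p).
by rewrite pC; apply/forall_inP => u /pE ->.
Qed.

Definition recolour g : {ffun 'I_d -> 'I_d.+1} := [ffun u => recolour_perm g (g u)].

Lemma recolour_Omega g : g \in Omega L -> recolour g \in Omega L.
Proof.
move=> gO; have [/OmegaP[g_inj gL] [_ pE]] := (gO, recolour_permP gO).
apply/OmegaP; split=> [u v|u]; rewrite !ffunE; first by move/perm_inj/g_inj.
have [uB|uB] := boolP (u \in B); first by rewrite pE ?recolour_target_L.
exact: mem_free_list.
Qed.

Lemma recolour_A g u : g \in Omega L -> u \in A -> recolour g u = xiA u.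
Proof.
move=> gO uA; have [_ pE] := recolour_permP gO.
by rewrite ffunE pE ?(subsetP Aset_sub) // /recolour_target uA.
Qed.

Lemma recolour_fresh g u :
  g \in Omega L -> u \in B :\: A -> recolour g u \notin reserved_colours.
Proof.
move=> gO uBA; have [_ pE] := recolour_permP gO; have /setDP[uB _] := uBA.
by rewrite ffunE pE // (recolour_target_fresh g uBA).1.
Qed.

Lemma card_Omega_le : #|Omega L| <= #|recolour @: Omega L| * (palette_bound t)`!.
Proof.
apply: leq_trans (card_le_perm_image (C := palette) (fun g gO => (recolour_permP gO).1)) _.
by rewrite leq_mul2l leq_fact ?card_palette ?orbT.
Qed.

Lemma good_pair_alpha_recolour g : g \in Omega L ->
  #|[set u in A | alpha u != xiA u]| <= 1 -> good_pair L alpha (recolour g).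
Proof.
move=> gO agree; have /OmegaP[xi_inj _] := recolour_Omega gO.
apply: (good_pair_left_agree (A := A)) => // [u v uB vB E|].
  apply/negPn/negP => vA; have vBA : v \in B :\: A by rewrite in_setD vA inE.
  have uB' : u \in B by rewrite inE.
  by move: (recolour_fresh gO vBA); rewrite E /reserved_colours !in_setU imset_f.
apply: leq_trans agree; apply/subset_leq_card/subsetP => u.
by move=> /setIdP[uA ne]; apply/setIdP; rewrite -(recolour_A gO uA).
Qed.

Lemma good_pair_recolour_beta g : g \in Omega L ->
  #|[set u in A | xiA u != beta u]| <= 1 -> good_pair L (recolour g) beta.
Proof.
move=> gO agree; have /OmegaP[xi_inj _] := recolour_Omega gO.
apply: (good_pair_right_agree (A := A)) => // [u v uB vB E|].
  apply/negPn/negP => uA; have uBA : u \in B :\: A by rewrite in_setD uA inE.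
  have vB' : v \in B by rewrite inE.
  by move: (recolour_fresh gO uBA); rewrite -E /reserved_colours !in_setU imset_f ?orbT.
apply: leq_trans agree; apply/subset_leq_card/subsetP => u.
by move=> /setIdP[uA ne]; apply/setIdP; rewrite -(recolour_A gO uA).
Qed.

End Recolouring.

Import GRing.Theory Num.Theory.
Local Open Scope ring_scope.

Theorem lemma16 :
  forall t : nat, (0 < t)%N ->
  exists c : rat, 0 < c /\
  forall (d : nat) (L : 'I_d -> {set 'I_d.+1}),
    (1 <= d)%N -> feasible t L ->
    forall (alpha beta xiA : {ffun 'I_d -> 'I_d.+1}),
      alpha \in Omega L -> beta \in Omega L ->
      {in Aset t L &, injective xiA} ->
      (forall u, u \in Aset t L -> xiA u \in L u) ->
      (#|[set u in Aset t L | alpha u != xiA u]| <= 1)%N ->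
      (#|[set u in Aset t L | xiA u != beta u]| <= 1)%N ->
      exists S : {set {ffun 'I_d -> 'I_d.+1}},
        c * (#|Omega L|)%:R <= (#|S|)%:R /\
        forall xi, xi \in S ->
          [/\ xi \in Omega L, (forall u, u \in Aset t L -> xi u = xiA u),
               good_pair L alpha xi & good_pair L xi beta].
Proof.
move=> t _; exists (((palette_bound t)`!)%:R)^-1.
split; first by rewrite invr_gt0 ltr0n fact_gt0.
move=> d L _ feasL alpha beta xiA _ _ xiA_inj xiA_L agree_alpha agree_beta.
have [tau [tau_L tau_fresh tau_inj]] := exists_fresh_choice feasL alpha beta xiA.
pose xi := recolour t L alpha beta xiA tau.
exists (xi @: Omega L); split.
  rewrite mulrC ler_pdivrMr ?ltr0n ?fact_gt0 // -natrM ler_nat.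
  exact: card_Omega_le.
move=> _ /imsetP[g gO ->]; split.
- exact: recolour_Omega.
- by move=> u; apply: recolour_A.
- exact: good_pair_alpha_recolour.
- exact: good_pair_recolour_beta.
Qed.
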